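(* Every countable equivalence structure is relatively $\Delta^0_3$ bi-embeddably categorical.
   Context: An equivalence structure $\mathcal{A}=(A,E)$ has universe $A\subseteq\omega$ and an equivalence relation $E$ on $A$; structures are identified with their atomic diagrams. Two structures are bi-embeddable if each embeds into the other. A countable structure $\mathcal{A}$ is relatively $\Delta^0_3$ bi-embeddably categorical if for every structure $\mathcal{B}$ bi-embeddable with $\mathcal{A}$ there are embeddings $\mathcal{A}\hookrightarrow\mathcal{B}$ and $\mathcal{B}\hookrightarrow\mathcal{A}$ that are $\Delta^0_3$ relative to $\mathcal{A}\oplus\mathcal{B}$ (i.e., computable in $(\mathcal{A}\oplus\mathcal{B})''$). *)

From Stdlib Require Import Arith.

Record EqStr := mkEqStr { dom : nat -> Prop; rel : nat -> nat -> Prop }.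

Definition is_equivalence_structure (S : EqStr) : Prop :=
  (forall x y, rel S x y -> dom S x /\ dom S y) /\
  (forall x, dom S x -> rel S x x) /\
  (forall x y, rel S x y -> rel S y x) /\
  (forall x y z, rel S x y -> rel S y z -> rel S x z).

Definition embedding (S T : EqStr) (f : nat -> nat) : Prop :=
  (forall x, dom S x -> dom T (f x)) /\
  (forall x y, dom S x -> dom S y -> f x = f y -> x = y) /\
  (forall x y, dom S x -> dom S y -> (rel S x y <-> rel T (f x) (f y))).

Definition bi_embeddable (S T : EqStr) : Prop :=
  (exists f, embedding S T f) /\ (exists g, embedding T S g).

Definition cpair (x y : nat) : nat := (x + y) * (x + y + 1) / 2 + y.

Definition diagram (S : EqStr) (n : nat) : Prop :=
  (exists x, n = 2 * x /\ dom S x) \/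
  (exists x y, n = 2 * cpair x y + 1 /\ rel S x y).

Definition join (X Y : nat -> Prop) (n : nat) : Prop :=
  (exists m, n = 2 * m /\ X m) \/ (exists m, n = 2 * m + 1 /\ Y m).

(* de Bruijn variables; environments are functions nat -> nat *)
Inductive term : Type :=
| tvar : nat -> term
| tzero : term
| tsucc : term -> term
| tadd : term -> term -> term
| tmul : term -> term -> term.

Inductive form : Type :=
| fEq : term -> term -> form
| fLt : term -> term -> form
| fIn : term -> form
| fNot : form -> form
| fAnd : form -> form -> form
| fOr : form -> form -> form
| fBall : term -> form -> form       (* forall v0 < t (t in outer env), phi *)
| fBex : term -> form -> form
| fAll : form -> form
| fEx : form -> form.

Definition scons (a : nat) (e : nat -> nat) : nat -> nat :=
  fun k => match k with 0 => a | S k' => e k' end.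

Fixpoint teval (e : nat -> nat) (t : term) : nat :=
  match t with
  | tvar k => e k
  | tzero => 0
  | tsucc t => S (teval e t)
  | tadd a b => teval e a + teval e b
  | tmul a b => teval e a * teval e b
  end.

Fixpoint sat (X : nat -> Prop) (e : nat -> nat) (f : form) : Prop :=
  match f with
  | fEq a b => teval e a = teval e b
  | fLt a b => teval e a < teval e b
  | fIn a => X (teval e a)
  | fNot g => ~ sat X e g
  | fAnd g h => sat X e g /\ sat X e h
  | fOr g h => sat X e g \/ sat X e h
  | fBall t g => forall z, z < teval e t -> sat X (scons z e) g
  | fBex t g => exists z, z < teval e t /\ sat X (scons z e) g
  | fAll g => forall z, sat X (scons z e) g
  | fEx g => exists z, sat X (scons z e) g
  end.

Fixpoint bounded (f : form) : Prop :=
  match f with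
  | fEq _ _ | fLt _ _ | fIn _ => True
  | fNot g => bounded g
  | fAnd g h | fOr g h => bounded g /\ bounded h
  | fBall _ g | fBex _ g => bounded g
  | fAll _ | fEx _ => False
  end.

Inductive isSigma : nat -> form -> Prop :=
| sig0 f : bounded f -> isSigma 0 f
| sigPi n f : isPi n f -> isSigma (S n) f
| sigEx n f : isSigma (S n) f -> isSigma (S n) (fEx f)
with isPi : nat -> form -> Prop :=
| pi0 f : bounded f -> isPi 0 f
| piSig n f : isSigma n f -> isPi (S n) f
| piAll n f : isPi (S n) f -> isPi (S n) (fAll f).

Definition env2 (x y : nat) : nat -> nat := scons x (scons y (fun _ => 0)).

Definition Sigma_rel (n : nat) (X : nat -> Prop) (R : nat -> nat -> Prop) : Prop :=
  exists f, isSigma n f /\ forall x y, R x y <-> sat X (env2 x y) f.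

(* A total function f : omega -> omega is Delta^0_n relative to X:
   its graph is both Sigma^0_n(X) and Pi^0_n(X). *)
Definition Delta_fun (n : nat) (X : nat -> Prop) (f : nat -> nat) : Prop :=
  Sigma_rel n X (fun x y => f x = y) /\ Sigma_rel n X (fun x y => f x <> y).

Definition rel_Delta3_biemb_categorical (S : EqStr) : Prop :=
  forall T : EqStr, is_equivalence_structure T -> bi_embeddable S T ->
    exists f g,
      embedding S T f /\ embedding T S g /\
      Delta_fun 3 (join (diagram S) (diagram T)) f /\
      Delta_fun 3 (join (diagram S) (diagram T)) g.

(* Let h : A -> B be an embedding of equivalence structures. Measure classes by ranks (the
   position of an element in its class, in the order of omega): an A-class fits into a B-class if
   every rank realised in the first is realised in the second. Call an A-class rare if it fits into
   only finitely many B-classes, say none beyond b. Among b + 2 rare classes, h sends one beyond b;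
   that class fits into its image while the first does not, so it is strictly smaller. Hence
   infinitely many rare classes would give an infinite descent, and there are finitely many. They
   are sent where h sends them (finite information); every other class is sent, in increasing
   order, to the least unused B-class into which it fits, and elements are matched by rank. Fitting
   is Pi^0_2 in A (+) B, so this greedy choice, made arithmetical by Goedel's beta function, is
   Delta^0_3. *)

From Stdlib Require Import Arith Lia List ZArith Znumtheory Classical ClassicalEpsilon.
Import ListNotations.
Open Scope nat_scope.

Definition env := nat -> nat.

Fixpoint tsubst (s : nat -> term) (t : term) : term :=
  match t with
  | tvar k => s k
  | tzero => tzero
  | tsucc a => tsucc (tsubst s a)
  | tadd a b => tadd (tsubst s a) (tsubst s b)
  | tmul a b => tmul (tsubst s a) (tsubst s b)
  end.

Definition tshift (t : term) : term := tsubst (fun k => tvar (S k)) t.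

Definition up_subst (s : nat -> term) (k : nat) : term :=
  match k with 0 => tvar 0 | S k' => tshift (s k') end.

Fixpoint fsubst (s : nat -> term) (f : form) : form :=
  match f with
  | fEq a b => fEq (tsubst s a) (tsubst s b)
  | fLt a b => fLt (tsubst s a) (tsubst s b)
  | fIn a => fIn (tsubst s a)
  | fNot g => fNot (fsubst s g)
  | fAnd g h => fAnd (fsubst s g) (fsubst s h)
  | fOr g h => fOr (fsubst s g) (fsubst s h)
  | fBall t g => fBall (tsubst s t) (fsubst (up_subst s) g)
  | fBex t g => fBex (tsubst s t) (fsubst (up_subst s) g)
  | fAll g => fAll (fsubst (up_subst s) g)
  | fEx g => fEx (fsubst (up_subst s) g)
  end.

Definition env_eq (e e' : env) : Prop := forall k, e k = e' k.

Lemma teval_env_eq e e' t : env_eq e e' -> teval e t = teval e' t.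
Proof. intros He; induction t; simpl; auto. Qed.

Lemma scons_env_eq z e e' : env_eq e e' -> env_eq (scons z e) (scons z e').
Proof. intros He [|k]; simpl; auto. Qed.

Lemma sat_env_eq X f : forall e e', env_eq e e' -> sat X e f <-> sat X e' f.
Proof.
  induction f; intros e e' He; simpl; rewrite ?(teval_env_eq e e' _ He);
    try (rewrite (IHf1 e e' He), (IHf2 e e' He)); try rewrite (IHf e e' He); try tauto.
  all: setoid_rewrite (fun z => IHf _ _ (scons_env_eq z e e' He)); tauto.
Qed.

Lemma teval_tsubst e s t : teval e (tsubst s t) = teval (fun k => teval e (s k)) t.
Proof. induction t; simpl; auto. Qed.

Lemma teval_tshift z e t : teval (scons z e) (tshift t) = teval e t.
Proof. apply teval_tsubst. Qed.

Lemma up_subst_env_eq s z e :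
  env_eq (fun k => teval (scons z e) (up_subst s k)) (scons z (fun k => teval e (s k))).
Proof. intros [|k]; simpl; [reflexivity | apply teval_tshift]. Qed.

Lemma sat_fsubst X f : forall s e, sat X e (fsubst s f) <-> sat X (fun k => teval e (s k)) f.
Proof.
  induction f; intros s e; simpl; rewrite ?teval_tsubst;
    try (rewrite (IHf1 s e), (IHf2 s e)); try rewrite (IHf s e); try tauto.
  all: setoid_rewrite IHf;
    setoid_rewrite (fun z => sat_env_eq X f _ _ (up_subst_env_eq s z e)); tauto.
Qed.

Lemma bounded_fsubst f : forall s, bounded f -> bounded (fsubst s f).
Proof. induction f; simpl; intros s Hf; try destruct Hf; auto. Qed.

Scheme isSigma_mut := Induction for isSigma Sort Prop
with isPi_mut := Induction for isPi Sort Prop.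
Combined Scheme isSigma_isPi_mut from isSigma_mut, isPi_mut.

Lemma fsubst_isSigma_isPi :
  (forall n f, isSigma n f -> forall s, isSigma n (fsubst s f)) /\
  (forall n f, isPi n f -> forall s, isPi n (fsubst s f)).
Proof.
  apply isSigma_isPi_mut; intros; simpl;
    [apply sig0 | apply sigPi | apply sigEx | apply pi0 | apply piSig | apply piAll];
    auto using bounded_fsubst.
Qed.

Lemma isSigma_isPi_S :
  (forall n f, isSigma n f -> isSigma (S n) f) /\ (forall n f, isPi n f -> isPi (S n) f).
Proof.
  apply isSigma_isPi_mut; intros;
    [apply sigPi, pi0 | apply sigPi | apply sigEx | apply piSig, sig0 | apply piSig | apply piAll];
    auto.
Qed.

Fixpoint fneg (f : form) : form :=
  match f with
  | fEx g => fAll (fneg g)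
  | fAll g => fEx (fneg g)
  | _ => fNot f
  end.

Lemma sat_fneg X f : forall e, sat X e (fneg f) <-> ~ sat X e f.
Proof.
  induction f; intros e; simpl; try tauto.
  - setoid_rewrite IHf; split; [firstorder | apply not_all_ex_not].
  - setoid_rewrite IHf; firstorder.
Qed.

Lemma fneg_bounded f : bounded f -> fneg f = fNot f.
Proof. destruct f; simpl; easy. Qed.

Lemma fneg_isSigma_isPi :
  (forall n f, isSigma n f -> isPi n (fneg f)) /\ (forall n f, isPi n f -> isSigma n (fneg f)).
Proof.
  apply isSigma_isPi_mut; intros; simpl; try rewrite fneg_bounded by assumption;
    [apply pi0 | apply piSig | apply piAll | apply sig0 | apply sigPi | apply sigEx]; auto.
Qed.

Lemma bounded_isSigma_isPi n f : bounded f -> isSigma n f /\ isPi n f.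
Proof.
  intros Hf; induction n; split; constructor; tauto.
Qed.

(** * Definability relative to an oracle *)

Definition definable (X : nat -> Prop) (C : form -> Prop) (P : env -> Prop) : Prop :=
  exists f, C f /\ forall e, P e <-> sat X e f.

Notation Delta0Def X := (definable X bounded).
Notation SigmaDef X n := (definable X (isSigma n)).
Notation PiDef X n := (definable X (isPi n)).

Definition terms (ts : list term) (k : nat) : term := nth k ts tzero.

Definition Ball (t : term) (P : env -> Prop) (e : env) : Prop :=
  forall z, z < teval e t -> P (scons z e).
Definition Bex (t : term) (P : env -> Prop) (e : env) : Prop :=
  exists z, z < teval e t /\ P (scons z e).
Definition Ex (P : env -> Prop) (e : env) : Prop := exists z, P (scons z e).
Definition All (P : env -> Prop) (e : env) : Prop := forall z, P (scons z e).

Section Definable.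
Variable X : nat -> Prop.

Lemma definable_ext C P Q : (forall e, P e <-> Q e) -> definable X C P -> definable X C Q.
Proof.
  intros HPQ [f [Hf HP]]; exists f; split; [exact Hf|].
  intros e; rewrite <- HPQ; apply HP.
Qed.

Lemma definable_weaken (C C' : form -> Prop) P :
  (forall f, C f -> C' f) -> definable X C P -> definable X C' P.
Proof. intros HC [f [Hf HP]]; exists f; auto. Qed.

Lemma definable_env_eq C P e e' : definable X C P -> env_eq e e' -> P e <-> P e'.
Proof. intros [f [_ HP]] He; rewrite !HP; apply sat_env_eq, He. Qed.

Lemma definable_subst C P s : (forall f, C f -> C (fsubst s f)) ->
  definable X C P -> definable X C (fun e => P (fun k => teval e (s k))).
Proof.
  intros HC [f [Hf HP]]; exists (fsubst s f); split; [auto|].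
  intros e; rewrite sat_fsubst; apply HP.
Qed.

Lemma Delta0_subst P ts :
  Delta0Def X P -> Delta0Def X (fun e => P (fun k => teval e (terms ts k))).
Proof. apply definable_subst; intros; apply bounded_fsubst; assumption. Qed.

Lemma Sigma_subst n P ts :
  SigmaDef X n P -> SigmaDef X n (fun e => P (fun k => teval e (terms ts k))).
Proof. apply definable_subst; intros; apply fsubst_isSigma_isPi; assumption. Qed.

Lemma Pi_subst n P ts :
  PiDef X n P -> PiDef X n (fun e => P (fun k => teval e (terms ts k))).
Proof. apply definable_subst; intros; apply fsubst_isSigma_isPi; assumption. Qed.

Lemma Sigma_of_Delta0 n P : Delta0Def X P -> SigmaDef X n P.
Proof. apply definable_weaken; intros; apply bounded_isSigma_isPi; assumption. Qed.

Lemma Pi_of_Delta0 n P : Delta0Def X P -> PiDef X n P.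
Proof. apply definable_weaken; intros; apply bounded_isSigma_isPi; assumption. Qed.

Lemma Delta0_of_Sigma0 P : SigmaDef X 0 P -> Delta0Def X P.
Proof. apply definable_weaken; intros f Hf; inversion Hf; assumption. Qed.

Lemma Sigma_le n m P : n <= m -> SigmaDef X n P -> SigmaDef X m P.
Proof.
  intros Hnm; apply definable_weaken; induction Hnm; intros f Hf; auto.
  apply isSigma_isPi_S; auto.
Qed.

Lemma Pi_S n P : PiDef X n P -> PiDef X (S n) P.
Proof. apply definable_weaken, isSigma_isPi_S. Qed.

Lemma Pi_of_Sigma n P : SigmaDef X n P -> PiDef X (S n) P.
Proof. apply definable_weaken, piSig. Qed.

Lemma Sigma_of_Pi n P : PiDef X n P -> SigmaDef X (S n) P.
Proof. apply definable_weaken, sigPi. Qed.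

Lemma Pi_not n P : SigmaDef X n P -> PiDef X n (fun e => ~ P e).
Proof.
  intros [f [Hf HP]]; exists (fneg f); split; [apply fneg_isSigma_isPi, Hf|].
  intros e; rewrite sat_fneg, HP; tauto.
Qed.

Lemma Sigma_not n P : PiDef X n P -> SigmaDef X n (fun e => ~ P e).
Proof.
  intros [f [Hf HP]]; exists (fneg f); split; [apply fneg_isSigma_isPi, Hf|].
  intros e; rewrite sat_fneg, HP; tauto.
Qed.

Lemma Pi_of_Sigma_not n P : SigmaDef X n (fun e => ~ P e) -> PiDef X n P.
Proof. intros H; apply Pi_not in H; revert H; apply definable_ext; intros e; tauto. Qed.

Lemma Sigma_ex n P : SigmaDef X (S n) P -> SigmaDef X (S n) (Ex P).
Proof.
  intros [f [Hf HP]]; exists (fEx f); split; [apply sigEx, Hf|].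
  intros e; unfold Ex; simpl; setoid_rewrite HP; reflexivity.
Qed.

Lemma Pi_all n P : PiDef X (S n) P -> PiDef X (S n) (All P).
Proof.
  intros [f [Hf HP]]; exists (fAll f); split; [apply piAll, Hf|].
  intros e; unfold All; simpl; setoid_rewrite HP; reflexivity.
Qed.

Lemma Delta0_eq a b : Delta0Def X (fun e => teval e a = teval e b).
Proof. exists (fEq a b); simpl; split; tauto. Qed.

Lemma Delta0_lt a b : Delta0Def X (fun e => teval e a < teval e b).
Proof. exists (fLt a b); simpl; split; tauto. Qed.

Lemma Delta0_in a : Delta0Def X (fun e => X (teval e a)).
Proof. exists (fIn a); simpl; split; tauto. Qed.

Lemma Delta0_False : Delta0Def X (fun _ => False).
Proof.
  apply definable_ext with (fun e => teval e tzero < teval e tzero);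
    [simpl; split; [apply Nat.lt_irrefl | contradiction] | apply Delta0_lt].
Qed.

Lemma Delta0_not P : Delta0Def X P -> Delta0Def X (fun e => ~ P e).
Proof.
  intros [f [Hf HP]]; exists (fNot f); split; [exact Hf|].
  intros e; simpl; rewrite HP; reflexivity.
Qed.

Lemma Delta0_and P Q : Delta0Def X P -> Delta0Def X Q -> Delta0Def X (fun e => P e /\ Q e).
Proof.
  intros [f [Hf HP]] [g [Hg HQ]]; exists (fAnd f g); split; [split; assumption|].
  intros e; simpl; rewrite HP, HQ; reflexivity.
Qed.

Lemma Delta0_or P Q : Delta0Def X P -> Delta0Def X Q -> Delta0Def X (fun e => P e \/ Q e).
Proof.
  intros [f [Hf HP]] [g [Hg HQ]]; exists (fOr f g); split; [split; assumption|].
  intros e; simpl; rewrite HP, HQ; reflexivity.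
Qed.

Lemma Delta0_ball t P : Delta0Def X P -> Delta0Def X (Ball t P).
Proof.
  intros [f [Hf HP]]; exists (fBall t f); split; [exact Hf|].
  intros e; unfold Ball; simpl; setoid_rewrite HP; reflexivity.
Qed.

Lemma Delta0_bex t P : Delta0Def X P -> Delta0Def X (Bex t P).
Proof.
  intros [f [Hf HP]]; exists (fBex t f); split; [exact Hf|].
  intros e; unfold Bex; simpl; setoid_rewrite HP; reflexivity.
Qed.

Definition skip_var (i k : nat) : nat := if k <? i then k else S k.
Definition swap01 (k : nat) : nat := match k with 0 => 1 | 1 => 0 | _ => k end.

Lemma Pi_rename n P (rho : nat -> nat) :
  PiDef X n P -> PiDef X n (fun e => P (fun k => e (rho k))).
Proof.
  apply (definable_subst _ _ (fun k => tvar (rho k))).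
  intros; apply fsubst_isSigma_isPi; assumption.
Qed.

Definition connective_closed (C : form -> Prop) : Prop :=
  (forall P Q, definable X C P -> definable X C Q -> definable X C (fun e => P e /\ Q e)) /\
  (forall P Q, definable X C P -> definable X C Q -> definable X C (fun e => P e \/ Q e)) /\
  (forall t P, definable X C P -> definable X C (Ball t P)) /\
  (forall t P, definable X C P -> definable X C (Bex t P)).

Lemma Sigma0_closed : connective_closed (isSigma 0).
Proof.
  repeat split; intros; apply Sigma_of_Delta0;
    [apply Delta0_and | apply Delta0_or | apply Delta0_ball | apply Delta0_bex];
    auto using Delta0_of_Sigma0.
Qed.

Lemma not_Ball_iff t P e : ~ Ball t P e <-> Bex t (fun e => ~ P e) e.
Proof.
  unfold Ball, Bex; split; [|firstorder].
  intros H; apply NNPP; intros H'; apply H; intros z Hz; apply NNPP; eauto.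
Qed.

Lemma not_Bex_iff t P e : ~ Bex t P e <-> Ball t (fun e => ~ P e) e.
Proof. unfold Ball, Bex; firstorder. Qed.

Lemma Pi_closed_of_Sigma_closed n : connective_closed (isSigma n) -> connective_closed (isPi n).
Proof.
  intros (Hand & Hor & Hball & Hbex); repeat split; intros; apply Pi_of_Sigma_not.
  - apply definable_ext with (fun e => ~ P e \/ ~ Q e); [intros e; tauto|].
    apply Hor; apply Sigma_not; assumption.
  - apply definable_ext with (fun e => ~ P e /\ ~ Q e); [intros e; tauto|].
    apply Hand; apply Sigma_not; assumption.
  - apply definable_ext with (Bex t (fun e => ~ P e)).
    + intros e; rewrite not_Ball_iff; reflexivity.
    + apply Hbex, Sigma_not; assumption.
  - apply definable_ext with (Ball t (fun e => ~ P e)).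
    + intros e; rewrite not_Bex_iff; reflexivity.
    + apply Hball, Sigma_not; assumption.
Qed.

(* Two unbounded existentials are contracted into one bounding both. *)
Lemma Sigma_normal_form n P : connective_closed (isPi n) -> SigmaDef X (S n) P ->
  exists Q, PiDef X n Q /\ forall e, P e <-> Ex Q e.
Proof.
  intros (_ & _ & _ & Hbex) [f [Hf HP]].
  enough (Hnf : exists Q, PiDef X n Q /\ forall e, sat X e f <-> Ex Q e).
  { destruct Hnf as [Q [HQ HfQ]]; exists Q; split; [exact HQ|]; intros e; rewrite HP; apply HfQ. }
  clear P HP; remember (S n) as m eqn:Hm.
  induction Hf as [f Hf | m f Hf | m f Hf IH]; try discriminate.
  - injection Hm as ->; exists (fun e => sat X (fun k => e (S k)) f); split.
    + apply (Pi_rename n (fun e => sat X e f)); exists f; split; [exact Hf | reflexivity].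
    + intros e; unfold Ex; split; [intros H; exists 0; exact H | intros [z H]; exact H].
  - destruct (IH Hm) as [Q [HQ HgQ]].
    exists (Bex (tvar 0) (Bex (tvar 1) (fun e => Q (fun k => e (skip_var 2 k))))); split.
    + apply Hbex, Hbex, Pi_rename, HQ.
    + intros e; unfold Ex, Bex; simpl; setoid_rewrite HgQ; unfold Ex; split.
      * intros [y [z Hz]]; exists (S (y + z)), y; split; [lia|]; exists z; split; [lia|].
        revert Hz; apply (definable_env_eq _ _ _ _ HQ); intros [|[|k]]; reflexivity.
      * intros [p [y [_ [z [_ Hz]]]]]; exists y, z.
        revert Hz; apply (definable_env_eq _ _ _ _ HQ); intros [|[|k]]; reflexivity.
Qed.

Lemma bounded_collection (R : nat -> nat -> Prop) t :
  (forall z, z < t -> exists w, R z w) -> exists W, forall z, z < t -> exists w, w < W /\ R z w.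
Proof.
  induction t as [|t IH]; intros Htot; [exists 0; intros; lia|].
  destruct IH as [W HW]; [intros z Hz; apply Htot; lia|].
  destruct (Htot t) as [w Hw]; [lia|].
  exists (S (W + w)); intros z Hz.
  destruct (Nat.eq_dec z t) as [->|Hne]; [exists w; split; [lia | exact Hw]|].
  destruct (HW z) as [w' [Hw' HR]]; [lia|]; exists w'; split; [lia | exact HR].
Qed.

Section SigmaStep.
Variable n : nat.
Hypothesis Pi_closed : connective_closed (isPi n).

Lemma Sigma_S_and P Q :
  SigmaDef X (S n) P -> SigmaDef X (S n) Q -> SigmaDef X (S n) (fun e => P e /\ Q e).
Proof.
  intros HP HQ; destruct (Sigma_normal_form n P Pi_closed HP) as [P1 [HP1 EP]].
  destruct (Sigma_normal_form n Q Pi_closed HQ) as [Q1 [HQ1 EQ]].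
  apply definable_ext with
    (Ex (Ex (fun e => P1 (fun k => e (S k)) /\ Q1 (fun k => e (skip_var 1 k))))).
  - intros e; rewrite EP, EQ; unfold Ex; split.
    + intros [z [w [Hz Hw]]]; split; [exists z; exact Hz | exists w].
      revert Hw; apply (definable_env_eq _ _ _ _ HQ1); intros [|k]; reflexivity.
    + intros [[z Hz] [w Hw]]; exists z, w; split; [exact Hz|].
      revert Hw; apply (definable_env_eq _ _ _ _ HQ1); intros [|k]; reflexivity.
  - apply Sigma_ex, Sigma_ex, Sigma_of_Pi, Pi_closed; [apply (Pi_rename n P1 S) | apply Pi_rename];
    assumption.
Qed.

Lemma Sigma_S_or P Q :
  SigmaDef X (S n) P -> SigmaDef X (S n) Q -> SigmaDef X (S n) (fun e => P e \/ Q e).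
Proof.
  intros HP HQ; destruct (Sigma_normal_form n P Pi_closed HP) as [P1 [HP1 EP]].
  destruct (Sigma_normal_form n Q Pi_closed HQ) as [Q1 [HQ1 EQ]].
  apply definable_ext with (Ex (fun e => P1 e \/ Q1 e)).
  - intros e; rewrite EP, EQ; unfold Ex.
    split; [intros [z [Hz|Hz]] | intros [[z Hz]|[z Hz]]]; eauto.
  - apply Sigma_ex, Sigma_of_Pi, Pi_closed; assumption.
Qed.

(* Bounded collection moves the bounded universal inside the witness. *)
Lemma Sigma_S_ball t P : SigmaDef X (S n) P -> SigmaDef X (S n) (Ball t P).
Proof.
  intros HP; destruct (Sigma_normal_form n P Pi_closed HP) as [P1 [HP1 EP]].
  apply definable_ext with
    (Ex (Ball (tshift t) (Bex (tvar 1) (fun e => P1 (fun k => e (skip_var 2 k)))))).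
  - intros e; unfold Ball, Bex, Ex; setoid_rewrite teval_tshift; setoid_rewrite EP; unfold Ex.
    split.
    + intros [W HW] z Hz; destruct (HW z Hz) as [w [_ Hw]]; exists w.
      revert Hw; apply (definable_env_eq _ _ _ _ HP1); intros [|[|k]]; reflexivity.
    + intros Hall.
      destruct (bounded_collection (fun z w => P1 (scons w (scons z e))) (teval e t) Hall)
        as [W HW].
      exists W; intros z Hz; destruct (HW z Hz) as [w [Hw HPw]]; exists w; split; [exact Hw|].
      revert HPw; apply (definable_env_eq _ _ _ _ HP1); intros [|[|k]]; reflexivity.
  - apply Sigma_ex, Sigma_of_Pi, Pi_closed, Pi_closed, Pi_rename, HP1.
Qed.

Lemma Sigma_S_bex t P : SigmaDef X (S n) P -> SigmaDef X (S n) (Bex t P).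
Proof.
  intros HP; destruct (Sigma_normal_form n P Pi_closed HP) as [P1 [HP1 EP]].
  apply definable_ext with (Ex (Bex (tshift t) (fun e => P1 (fun k => e (swap01 k))))).
  - intros e; unfold Bex, Ex; setoid_rewrite teval_tshift; setoid_rewrite EP; unfold Ex; split.
    + intros [w [z [Hz Hw]]]; exists z; split; [exact Hz|]; exists w.
      revert Hw; apply (definable_env_eq _ _ _ _ HP1); intros [|[|k]]; reflexivity.
    + intros [z [Hz [w Hw]]]; exists w, z; split; [exact Hz|].
      revert Hw; apply (definable_env_eq _ _ _ _ HP1); intros [|[|k]]; reflexivity.
  - apply Sigma_ex, Sigma_of_Pi, Pi_closed, Pi_rename, HP1.
Qed.
End SigmaStep.

Lemma Sigma_closed n : connective_closed (isSigma n).
Proof.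
  induction n as [|n IH]; [apply Sigma0_closed|].
  pose proof (Pi_closed_of_Sigma_closed n IH) as HPi.
  split; [|split; [|split]]; intros;
    [apply Sigma_S_and | apply Sigma_S_or | apply Sigma_S_ball | apply Sigma_S_bex]; assumption.
Qed.

Lemma Sigma_and n P Q : SigmaDef X n P -> SigmaDef X n Q -> SigmaDef X n (fun e => P e /\ Q e).
Proof. apply Sigma_closed. Qed.

Lemma Sigma_or n P Q : SigmaDef X n P -> SigmaDef X n Q -> SigmaDef X n (fun e => P e \/ Q e).
Proof. apply Sigma_closed. Qed.

Lemma Sigma_ball n t P : SigmaDef X n P -> SigmaDef X n (Ball t P).
Proof. apply Sigma_closed. Qed.

Lemma Sigma_bex n t P : SigmaDef X n P -> SigmaDef X n (Bex t P).
Proof. apply Sigma_closed. Qed.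

Lemma Pi_and n P Q : PiDef X n P -> PiDef X n Q -> PiDef X n (fun e => P e /\ Q e).
Proof. apply Pi_closed_of_Sigma_closed, Sigma_closed. Qed.

Lemma Pi_or n P Q : PiDef X n P -> PiDef X n Q -> PiDef X n (fun e => P e \/ Q e).
Proof. apply Pi_closed_of_Sigma_closed, Sigma_closed. Qed.

End Definable.

(** * Goedel's beta function *)

Definition beta (c d i : nat) : nat := c mod S (S i * d).

Lemma Z_chinese_pair (m1 m2 a1 a2 : Z) : (0 < m1)%Z -> (0 < m2)%Z -> rel_prime m1 m2 ->
  exists x, (x mod m1 = a1 mod m1 /\ x mod m2 = a2 mod m2)%Z.
Proof.
  intros Hm1 Hm2 Hcop; destruct (rel_prime_bezout _ _ Hcop) as [u v Huv].
  exists (a1 * v * m2 + a2 * u * m1)%Z; split.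
  - replace (a1 * v * m2 + a2 * u * m1)%Z
      with (a1 + u * (a2 - a1) * m1 + a1 * (u * m1 + v * m2 - 1))%Z by ring.
    rewrite Huv, Z.sub_diag, Z.mul_0_r, Z.add_0_r; apply Z.mod_add; lia.
  - replace (a1 * v * m2 + a2 * u * m1)%Z
      with (a2 + v * (a1 - a2) * m2 + a2 * (u * m1 + v * m2 - 1))%Z by ring.
    rewrite Huv, Z.sub_diag, Z.mul_0_r, Z.add_0_r; apply Z.mod_add; lia.
Qed.

Lemma divide_fact k m : 0 < k <= m -> Nat.divide k (fact m).
Proof.
  induction m as [|m IH]; intros Hk; [lia|].
  destruct (Nat.eq_dec k (S m)) as [->|Hne]; simpl fact.
  - exists (fact m); lia.
  - apply Nat.divide_add_r; [|apply Nat.divide_mul_r]; apply IH; lia.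
Qed.

Lemma le_fact m : m <= fact m.
Proof. induction m; simpl fact; [lia|]; pose proof (lt_O_fact m); nia. Qed.

Section BetaModuli.
Variable m : nat.

Definition beta_modulus (i : nat) : Z := Z.of_nat (S (S i * fact m)).

Lemma beta_modulus_pos i : (0 < beta_modulus i)%Z.
Proof. unfold beta_modulus; lia. Qed.

(* A common divisor of the i-th and j-th moduli divides j - i, hence m!, hence 1. *)
Lemma beta_modulus_coprime i j : i < j <= m -> rel_prime (beta_modulus i) (beta_modulus j).
Proof.
  intros Hij; apply Zis_gcd_intro; try apply Z.divide_1_l; intros x Hi Hj.
  assert (Hdiff : (x | Z.of_nat (j - i))%Z).
  { replace (Z.of_nat (j - i))
      with (Z.of_nat (S j) * beta_modulus i - Z.of_nat (S i) * beta_modulus j)%Z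
      by (unfold beta_modulus; lia).
    apply Z.divide_sub_r; apply Z.divide_mul_r; assumption. }
  assert (Hfact : (x | Z.of_nat (fact m))%Z).
  { apply (Z.divide_trans _ _ _ Hdiff); destruct (divide_fact (j - i) m) as [q Hq]; [lia|].
    exists (Z.of_nat q); lia. }
  replace 1%Z with (beta_modulus i - Z.of_nat (S i) * Z.of_nat (fact m))%Z
    by (unfold beta_modulus; lia).
  apply Z.divide_sub_r; [|apply Z.divide_mul_r]; assumption.
Qed.

Fixpoint moduli_prod (k : nat) : Z :=
  match k with 0 => 1%Z | S k => (moduli_prod k * beta_modulus k)%Z end.

Lemma moduli_prod_pos k : (0 < moduli_prod k)%Z.
Proof. induction k; simpl; [lia|]; pose proof (beta_modulus_pos k); nia. Qed.

Lemma beta_modulus_divide_prod i k : i < k -> (beta_modulus i | moduli_prod k)%Z.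
Proof.
  induction k as [|k IH]; intros Hi; [lia|]; simpl.
  destruct (Nat.eq_dec i k) as [->|Hne].
  - apply Z.divide_factor_r.
  - apply Z.divide_mul_l, IH; lia.
Qed.

Lemma moduli_prod_coprime k j : k <= j <= m -> rel_prime (moduli_prod k) (beta_modulus j).
Proof.
  induction k as [|k IH]; intros Hkj; simpl; [apply rel_prime_1|].
  apply rel_prime_sym, rel_prime_mult; apply rel_prime_sym;
    [apply IH | apply beta_modulus_coprime]; lia.
Qed.

Lemma chinese_moduli (a : nat -> Z) k : k <= S m ->
  exists c, forall i, i < k -> (c mod beta_modulus i = a i mod beta_modulus i)%Z.
Proof.
  induction k as [|k IH]; intros Hk; [exists 0%Z; intros; lia|].
  destruct IH as [c Hc]; [lia|].
  destruct (Z_chinese_pair _ _ c (a k) (moduli_prod_pos k) (beta_modulus_pos k)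
              (moduli_prod_coprime k k ltac:(lia))) as [x [Hxc Hxa]].
  exists x; intros i Hi; destruct (Nat.eq_dec i k) as [->|Hne]; [exact Hxa|].
  pose proof (beta_modulus_divide_prod i k ltac:(lia)) as Hdiv.
  rewrite (Zmod_div_mod _ _ x (beta_modulus_pos i) (moduli_prod_pos k) Hdiv), Hxc,
    <- (Zmod_div_mod _ _ c (beta_modulus_pos i) (moduli_prod_pos k) Hdiv).
  apply Hc; lia.
Qed.
End BetaModuli.

Lemma le_list_max l x : In x l -> x <= list_max l.
Proof. exact (proj1 (Forall_forall _ l) (proj1 (list_max_le l _) (le_n _)) x). Qed.

(* Moduli [1 + (i + 1) m!] with [m] above [n] and every value make the residues exact. *)
Lemma beta_exists (f : nat -> nat) n : exists c d, forall i, i < n -> beta c d i = f i.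
Proof.
  set (M := list_max (map f (seq 0 n))); set (m := n + M).
  destruct (chinese_moduli m (fun i => Z.of_nat (f i)) n ltac:(lia)) as [c Hc].
  exists (Z.to_nat (c mod moduli_prod m n)), (fact m); intros i Hi.
  pose proof (moduli_prod_pos m n) as Hprod.
  pose proof (Z.mod_pos_bound c _ Hprod).
  assert (HfM : f i <= M) by (apply le_list_max, in_map, in_seq; lia).
  pose proof (le_fact m).
  apply Nat2Z.inj; unfold beta; rewrite Nat2Z.inj_mod, Z2Nat.id by lia.
  fold (beta_modulus m i).
  rewrite <- Zmod_div_mod
    by first [apply beta_modulus_pos | exact Hprod | apply beta_modulus_divide_prod, Hi].
  rewrite Hc by exact Hi; apply Z.mod_small; unfold beta_modulus; nia.
Qed.

Definition decide (P : Prop) : {P} + {~ P} := excluded_middle_informative P.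

Fixpoint count_below (C : nat -> Prop) (w : nat) : nat :=
  match w with 0 => 0 | S w' => count_below C w' + (if decide (C w') then 1 else 0) end.

Lemma count_below_ext C C' w : (forall z, C z <-> C' z) -> count_below C w = count_below C' w.
Proof.
  intros HC; induction w as [|w IH]; simpl; [reflexivity|].
  destruct (decide (C w)), (decide (C' w)); rewrite IH; firstorder.
Qed.

Lemma count_below_S_in C w : C w -> count_below C (S w) = S (count_below C w).
Proof. intros Hw; simpl; destruct (decide (C w)); [lia | contradiction]. Qed.

Lemma count_below_S_out C w : ~ C w -> count_below C (S w) = count_below C w.
Proof. intros Hw; simpl; destruct (decide (C w)); [contradiction | lia]. Qed.

Lemma count_below_mono C w w' : w <= w' -> count_below C w <= count_below C w'.
Proof. induction 1; simpl; lia. Qed.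

Lemma count_below_lt C y y' : C y -> y < y' -> count_below C y < count_below C y'.
Proof.
  intros Hy Hlt; pose proof (count_below_mono C (S y) y' Hlt) as Hmono.
  rewrite count_below_S_in in Hmono by exact Hy; lia.
Qed.

Lemma count_below_reach C w n :
  n < count_below C w -> exists y, y < w /\ C y /\ count_below C y = n.
Proof.
  induction w as [|w IH]; intros Hn; simpl in Hn; [lia|].
  destruct (decide (C w)) as [Hw|Hw].
  - destruct (Nat.eq_dec n (count_below C w)) as [->|Hne]; [exists w; auto|].
    destruct IH as [y Hy]; [lia | exists y; intuition lia].
  - destruct IH as [y Hy]; [lia | exists y; intuition lia].
Qed.

Definition list_below (C : nat -> Prop) (w : nat) : list nat :=
  filter (fun z => if decide (C z) then true else false) (seq 0 w).

Lemma length_list_below C w : length (list_below C w) = count_below C w.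
Proof.
  induction w as [|w IH]; [reflexivity|].
  unfold list_below in *; rewrite seq_S, filter_app, length_app, IH; simpl.
  destruct (decide (C w)); simpl; lia.
Qed.

Lemma In_list_below C w z : In z (list_below C w) <-> C z /\ z < w.
Proof.
  unfold list_below; rewrite filter_In, in_seq.
  destruct (decide (C z)); intuition (try discriminate; lia).
Qed.

Lemma NoDup_list_below C w : NoDup (list_below C w).
Proof. apply NoDup_filter, seq_NoDup. Qed.

Lemma NoDup_length_le_count C w l :
  NoDup l -> (forall z, In z l -> C z /\ z < w) -> length l <= count_below C w.
Proof.
  intros Hl Hin; rewrite <- length_list_below; apply NoDup_incl_length; [exact Hl|].
  intros z Hz; apply In_list_below, Hin, Hz.
Qed.

Definition is_least (Q : nat -> Prop) (m : nat) : Prop := Q m /\ forall k, k < m -> ~ Q k.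

Lemma least_exists (Q : nat -> Prop) n : Q n -> exists m, is_least Q m.
Proof.
  induction n as [n IH] using (well_founded_induction lt_wf); intros Hn.
  destruct (classic (exists k, k < n /\ Q k)) as [[k [Hk HQk]]|Hnone].
  - exact (IH k Hk HQk).
  - exists n; split; [exact Hn|]; intros k Hk HQk; apply Hnone; eauto.
Qed.

Definition least (Q : nat -> Prop) : nat := epsilon (inhabits 0) (is_least Q).

Lemma least_spec Q n : Q n -> is_least Q (least Q).
Proof. intros Hn; unfold least; apply epsilon_spec, (least_exists Q n Hn). Qed.

Lemma is_least_iff (Q Q' : nat -> Prop) m :
  (forall k, Q k <-> Q' k) -> is_least Q m -> is_least Q' m.
Proof.
  intros HQ [Hm Hmin]; split; [apply HQ, Hm|].
  intros k Hk; rewrite <- HQ; apply Hmin, Hk.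
Qed.

Lemma least_unique Q a b : is_least Q a -> is_least Q b -> a = b.
Proof.
  intros [Ha Ha'] [Hb Hb']; destruct (lt_eq_lt_dec a b) as [[Hlt|]|Hlt]; auto.
  - contradiction (Hb' a Hlt Ha).
  - contradiction (Ha' b Hlt Hb).
Qed.

Section Ranks.
Variable E : nat -> nat -> Prop.
Hypothesis E_sym : forall x y, E x y -> E y x.
Hypothesis E_trans : forall x y z, E x y -> E y z -> E x z.

Definition rep_of (r x : nat) : Prop := is_least (fun z => E z x) r.
Definition is_rep (r : nat) : Prop := rep_of r r.
Definition rank (x : nat) : nat := count_below (fun z => E z x) x.
(* [has_rank r n]: the class of [r] has more than [n] elements. *)
Definition has_rank (r n : nat) : Prop := exists y, E r y /\ rank y = n.

Lemma count_below_class x y w :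
  E x y -> count_below (fun z => E z x) w = count_below (fun z => E z y) w.
Proof. intros Hxy; apply count_below_ext; intros z; split; eauto. Qed.

Lemma rank_injective x y : E x y -> rank x = rank y -> x = y.
Proof.
  intros Hxy Hr; unfold rank in Hr; rewrite (count_below_class x y x Hxy) in Hr.
  destruct (lt_eq_lt_dec x y) as [[Hlt|]|Hlt]; [| assumption |].
  - pose proof (count_below_lt (fun z => E z y) x y Hxy Hlt); lia.
  - pose proof (count_below_lt (fun z => E z y) y x (E_trans _ _ _ (E_sym _ _ Hxy) Hxy) Hlt); lia.
Qed.

Lemma rep_of_exists x : E x x -> exists r, rep_of r x.
Proof. apply (least_exists (fun z => E z x)). Qed.

Lemma rep_of_unique r r' x : rep_of r x -> rep_of r' x -> r = r'.
Proof. apply least_unique. Qed.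

Lemma rep_of_class r x y : rep_of r x -> E x y -> rep_of r y.
Proof. intros [Hrx Hmin] Hxy; split; [eauto | intros z Hz Hzy; apply (Hmin z Hz); eauto]. Qed.

Lemma rep_of_is_rep r x : rep_of r x -> is_rep r.
Proof. intros Hr; apply (rep_of_class r x r Hr); apply E_sym, Hr. Qed.

Lemma is_rep_unique r r' : is_rep r -> is_rep r' -> E r r' -> r = r'.
Proof.
  intros Hr Hr' Hrr'; apply (rep_of_unique r r' r'); [apply (rep_of_class r r) |]; assumption.
Qed.

Lemma has_rank_le r n k : has_rank r n -> k <= n -> has_rank r k.
Proof.
  intros [y [Hry Hy]] Hk; assert (Hyy : E y y) by eauto.
  destruct (count_below_reach (fun z => E z y) (S y) k) as [y' [_ [Hy'y Hy']]].
  { rewrite count_below_S_in by exact Hyy; unfold rank in Hy; lia. }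
  exists y'; split; [eauto|]; unfold rank; rewrite (count_below_class y' y y' Hy'y); exact Hy'.
Qed.

Lemma has_rank_list r n : has_rank r n ->
  exists l, NoDup l /\ length l = S n /\ forall z, In z l -> E r z.
Proof.
  intros [y [Hry Hy]]; exists (list_below (fun z => E z y) (S y)); repeat split.
  - apply NoDup_list_below.
  - rewrite length_list_below, count_below_S_in by eauto; unfold rank in Hy; lia.
  - intros z Hz; apply In_list_below in Hz as [Hzy _]; eauto.
Qed.

Lemma list_has_rank r n l : E r r -> NoDup l -> length l = S n -> (forall z, In z l -> E r z) ->
  has_rank r n.
Proof.
  intros Hr Hl Hlen Hin.
  assert (Hcount : length l <= count_below (fun z => E z r) (S (list_max l))).
  { apply NoDup_length_le_count; [exact Hl|]; intros z Hz; split;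
      [apply E_sym, Hin, Hz | pose proof (le_list_max l z Hz); lia]. }
  destruct (count_below_reach (fun z => E z r) (S (list_max l)) n) as [y [_ [Hyr Hy]]]; [lia|].
  exists y; split; [auto|]; unfold rank; rewrite (count_below_class y r y Hyr); exact Hy.
Qed.
End Ranks.

Lemma beta_le c d i : beta c d i <= c.
Proof. apply Nat.Div0.mod_le. Qed.

Lemma beta_iff c d i r :
  beta c d i = r <-> r < S (S i * d) /\ exists q, q < S c /\ c = q * S (S i * d) + r.
Proof.
  unfold beta; split.
  - intros <-; split; [apply Nat.mod_upper_bound; lia|].
    exists (c / S (S i * d)); split; [|rewrite Nat.mul_comm; apply Nat.div_mod; lia].
    enough (c / S (S i * d) <= c) by lia; apply Nat.Div0.div_le_upper_bound; nia.
  - intros [Hr [q [_ Hc]]]; symmetry; apply (Nat.mod_unique c _ q r); lia.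
Qed.

Fixpoint numeral (k : nat) : term := match k with 0 => tzero | S k => tsucc (numeral k) end.

Lemma teval_numeral e k : teval e (numeral k) = k.
Proof. induction k; simpl; auto. Qed.

Section BasicDefinability.
Variable X : nat -> Prop.

Lemma Delta0_beta a b i r :
  Delta0Def X (fun e => beta (teval e a) (teval e b) (teval e i) = teval e r).
Proof.
  apply (Delta0_subst X (fun e => beta (e 0) (e 1) (e 2) = e 3) [a; b; i; r]).
  apply definable_ext with (fun e => e 3 < S (S (e 2) * e 1) /\
      Bex (tsucc (tvar 0)) (fun e => e 1 = e 0 * S (S (e 3) * e 2) + e 4) e).
  - intros e; rewrite beta_iff; reflexivity.
  - apply Delta0_and; [apply (Delta0_lt X (tvar 3) (tsucc (tmul (tsucc (tvar 2)) (tvar 1))))|].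
    apply Delta0_bex.
    apply (Delta0_eq X (tvar 1)
             (tadd (tmul (tvar 0) (tsucc (tmul (tsucc (tvar 3)) (tvar 2)))) (tvar 4))).
Qed.

(* Since [beta c d i <= c], naming its value costs only a bounded quantifier. *)
Lemma let_beta_iff (P : env -> Prop) a b i e :
  P (scons (beta (teval e a) (teval e b) (teval e i)) e) <->
  Bex (tsucc a)
    (fun e => beta (teval e (tshift a)) (teval e (tshift b)) (teval e (tshift i)) = e 0 /\ P e) e.
Proof.
  unfold Bex; simpl; setoid_rewrite teval_tshift; split.
  - intros HP; eexists; split; [|split; [reflexivity | exact HP]];
      pose proof (beta_le (teval e a) (teval e b) (teval e i)); lia.
  - intros [v [_ [<- HP]]]; exact HP.
Qed.

Lemma Sigma_let_beta n P a b i : SigmaDef X n P ->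
  SigmaDef X n (fun e => P (scons (beta (teval e a) (teval e b) (teval e i)) e)).
Proof.
  intros HP; eapply definable_ext; [intros e; symmetry; apply let_beta_iff|].
  apply Sigma_bex, Sigma_and; [apply Sigma_of_Delta0, (Delta0_beta _ _ _ (tvar 0)) | exact HP].
Qed.

Lemma Delta0_In a l : Delta0Def X (fun e => In (teval e a) l).
Proof.
  induction l as [|x l IH]; simpl; [apply Delta0_False|].
  apply Delta0_or; [|exact IH].
  apply definable_ext with (fun e => teval e (numeral x) = teval e a); [|apply Delta0_eq].
  intros e; rewrite teval_numeral; reflexivity.
Qed.

Lemma Delta0_In_pair a b (l : list (nat * nat)) :
  Delta0Def X (fun e => In (teval e a, teval e b) l).
Proof.
  induction l as [|[x y] l IH]; simpl; [apply Delta0_False|].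
  apply Delta0_or; [|exact IH].
  apply definable_ext with
    (fun e => teval e (numeral x) = teval e a /\ teval e (numeral y) = teval e b).
  - intros e; rewrite !teval_numeral; split; [intros [-> ->]; reflexivity | intros [=]; auto].
  - apply Delta0_and; apply Delta0_eq.
Qed.
End BasicDefinability.

Definition codes_rank (E : nat -> nat -> Prop) (c d x n : nat) : Prop :=
  beta c d 0 = 0 /\
  (forall i, i < x -> (E i x /\ beta c d (S i) = S (beta c d i)) \/
                      (~ E i x /\ beta c d (S i) = beta c d i)) /\
  beta c d x = n.

Lemma rank_iff_codes_rank E x n : rank E x = n <-> exists c d, codes_rank E c d x n.
Proof.
  split.
  - intros Hr; destruct (beta_exists (count_below (fun z => E z x)) (S x)) as [c [d Hb]].
    exists c, d; split; [|split].
    + apply Hb; lia.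
    + intros i Hi; rewrite !Hb by lia; destruct (classic (E i x)); [left | right];
        split; auto using count_below_S_in, count_below_S_out.
    + rewrite Hb by lia; exact Hr.
  - intros [c [d [H0 [Hstep Hx]]]].
    assert (Hb : forall i, i <= x -> beta c d i = count_below (fun z => E z x) i).
    { induction i as [|i IH]; intros Hi; [exact H0|].
      destruct (Hstep i) as [[HE ->]|[HE ->]]; [lia | |]; rewrite IH by lia; symmetry;
        auto using count_below_S_in, count_below_S_out. }
    unfold rank; rewrite <- Hb by lia; exact Hx.
Qed.

Section DefinableRank.
Variable X : nat -> Prop.
Variable E : nat -> nat -> Prop.
Hypothesis E_Delta0 : Delta0Def X (fun e => E (e 0) (e 1)).

Lemma Delta0_E a b : Delta0Def X (fun e => E (teval e a) (teval e b)).
Proof. exact (Delta0_subst X _ [a; b] E_Delta0). Qed.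

Lemma Delta0_rep_of a b : Delta0Def X (fun e => rep_of E (teval e a) (teval e b)).
Proof.
  apply (Delta0_subst X (fun e => rep_of E (e 0) (e 1)) [a; b]).
  apply (Delta0_and X _ (Ball (tvar 0) (fun e => ~ E (e 0) (e 2)))).
  - apply (Delta0_E (tvar 0) (tvar 1)).
  - apply Delta0_ball, Delta0_not, (Delta0_E (tvar 0) (tvar 2)).
Qed.

Lemma Sigma0_codes_rank : SigmaDef X 0 (fun e => codes_rank E (e 0) (e 1) (e 2) (e 3)).
Proof.
  unfold codes_rank; repeat apply Sigma_and.
  - apply Sigma_of_Delta0, (Delta0_beta X (tvar 0) (tvar 1) tzero tzero).
  - apply (Sigma_ball X 0 (tvar 2) (fun e =>
      (E (e 0) (e 3) /\ beta (e 1) (e 2) (S (e 0)) = S (beta (e 1) (e 2) (e 0))) \/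
      (~ E (e 0) (e 3) /\ beta (e 1) (e 2) (S (e 0)) = beta (e 1) (e 2) (e 0)))).
    apply Sigma_or; apply Sigma_and.
    + apply Sigma_of_Delta0, (Delta0_E (tvar 0) (tvar 3)).
    + apply (Sigma_let_beta X 0 (fun e => beta (e 2) (e 3) (S (e 1)) = S (e 0))
               (tvar 1) (tvar 2) (tvar 0)).
      apply Sigma_of_Delta0, (Delta0_beta X (tvar 2) (tvar 3) (tsucc (tvar 1)) (tsucc (tvar 0))).
    + apply Sigma_of_Delta0, Delta0_not, (Delta0_E (tvar 0) (tvar 3)).
    + apply (Sigma_let_beta X 0 (fun e => beta (e 2) (e 3) (S (e 1)) = e 0)
               (tvar 1) (tvar 2) (tvar 0)).
      apply Sigma_of_Delta0, (Delta0_beta X (tvar 2) (tvar 3) (tsucc (tvar 1)) (tvar 0)).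
  - apply Sigma_of_Delta0, (Delta0_beta X (tvar 0) (tvar 1) (tvar 2) (tvar 3)).
Qed.

Lemma Sigma1_rank a b : SigmaDef X 1 (fun e => rank E (teval e a) = teval e b).
Proof.
  apply (Sigma_subst X 1 (fun e => rank E (e 0) = e 1) [a; b]).
  apply definable_ext with (Ex (Ex (fun e => codes_rank E (e 1) (e 0) (e 2) (e 3)))).
  - intros e; rewrite rank_iff_codes_rank; reflexivity.
  - apply Sigma_ex, Sigma_ex, (Sigma_le X 0); [lia|].
    apply (Sigma_subst X 0 _ [tvar 1; tvar 0; tvar 2; tvar 3] Sigma0_codes_rank).
Qed.

Lemma Sigma1_has_rank a b : SigmaDef X 1 (fun e => has_rank E (teval e a) (teval e b)).
Proof.
  apply (Sigma_subst X 1 (fun e => has_rank E (e 0) (e 1)) [a; b]).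
  apply (Sigma_ex X 0 (fun e => E (e 1) (e 0) /\ rank E (e 0) = e 2)), Sigma_and.
  - apply Sigma_of_Delta0, (Delta0_E (tvar 1) (tvar 0)).
  - apply (Sigma1_rank (tvar 0) (tvar 2)).
Qed.
End DefinableRank.

(** * Rare classes *)

Definition fits_into (EA EB : nat -> nat -> Prop) (r d : nat) : Prop :=
  forall n, has_rank EA r n -> has_rank EB d n.

Section RareClasses.
Variables EA EB : nat -> nat -> Prop.
Hypothesis EA_sym : forall x y, EA x y -> EA y x.
Hypothesis EA_trans : forall x y z, EA x y -> EA y z -> EA x z.
Hypothesis EB_sym : forall x y, EB x y -> EB y x.
Hypothesis EB_trans : forall x y z, EB x y -> EB y z -> EB x z.
Variable h : nat -> nat.
Hypothesis h_dom : forall x, EA x x -> EB (h x) (h x).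
Hypothesis h_inj : forall x y, EA x x -> EA y y -> h x = h y -> x = y.
Hypothesis h_rel : forall x y, EA x x -> EA y y -> (EA x y <-> EB (h x) (h y)).

Definition image_rep (r : nat) : nat := least (fun z => EB z (h r)).

Lemma image_rep_of r : EA r r -> rep_of EB (image_rep r) (h r).
Proof. intros Hr; apply (least_spec (fun z => EB z (h r)) (h r)), h_dom, Hr. Qed.

Lemma image_rep_is_rep r : EA r r -> is_rep EB (image_rep r).
Proof. intros Hr; eapply rep_of_is_rep; eauto using image_rep_of. Qed.

Lemma image_rep_injective r r' :
  is_rep EA r -> is_rep EA r' -> image_rep r = image_rep r' -> r = r'.
Proof.
  intros Hr Hr' Himg; destruct (image_rep_of r (proj1 Hr)) as [Hh _].
  destruct (image_rep_of r' (proj1 Hr')) as [Hh' _]; rewrite Himg in Hh.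
  apply (is_rep_unique EA); auto; apply h_rel; [apply Hr | apply Hr' |]; eauto.
Qed.

Lemma fits_into_image_rep r : EA r r -> fits_into EA EB r (image_rep r).
Proof.
  intros Hr n Hn; destruct (has_rank_list EA EA_sym EA_trans r n Hn) as [l [Hl [Hlen Hin]]].
  destruct (image_rep_of r Hr) as [Hh _].
  apply (list_has_rank EB EB_sym EB_trans _ n (map h l)).
  - eauto.
  - apply NoDup_map_NoDup_ForallPairs; [|exact Hl]; intros x y Hx Hy; apply h_inj; eauto.
  - rewrite length_map; exact Hlen.
  - intros z Hz; apply in_map_iff in Hz as [x [<- Hx]]; apply (EB_trans _ (h r)); [exact Hh|].
    apply h_rel; eauto.
Qed.

Definition rare (r : nat) : Prop :=
  exists b, forall d, b < d -> is_rep EB d -> ~ fits_into EA EB r d.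

Section Unbounded.
Hypothesis rare_unbounded : forall M, exists r, M <= r /\ is_rep EA r /\ rare r.

Lemma rare_reps_list k :
  exists L, NoDup L /\ length L = k /\ forall r, In r L -> is_rep EA r /\ rare r.
Proof.
  induction k as [|k [L [HL [Hlen Hin]]]].
  { exists []; split; [constructor | split; [reflexivity | intros r []]]. }
  destruct (rare_unbounded (S (list_max L))) as [r [Hr HrL]].
  exists (r :: L); split; [|split; [simpl; lia | intros x [<-|Hx]; auto]].
  constructor; [|exact HL]; intros Hin'; pose proof (le_list_max L r Hin'); lia.
Qed.

(* Among [b + 2] rare classes one is sent by [h] beyond [b]; it fits into its image, which [r]
   does not. *)
Lemma rare_smaller r : rare r -> exists r1 m, rare r1 /\ has_rank EA r m /\ ~ has_rank EA r1 m.
Proof.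
  intros [b Hb]; destruct (rare_reps_list (S (S b))) as [L [HL [Hlen HinL]]].
  destruct (classic (exists r1, In r1 L /\ b < image_rep r1)) as [[r1 [Hr1 Hbig]]|Hsmall].
  - destruct (HinL r1 Hr1) as [Hrep1 Hrare1].
    pose proof (Hb _ Hbig (image_rep_is_rep r1 (proj1 Hrep1))) as Hnfit.
    apply not_all_ex_not in Hnfit as [m Hm]; exists r1, m; split; [exact Hrare1 | split].
    + apply NNPP; intros Hnot; apply Hm; intros Hrm; contradiction.
    + intros Hr1m; apply Hm; intros _; apply (fits_into_image_rep r1 (proj1 Hrep1) m Hr1m).
  - exfalso; assert (Hle : length (map image_rep L) <= length (seq 0 (S b))).
    { apply NoDup_incl_length.
      - apply NoDup_map_NoDup_ForallPairs; [|exact HL]; intros x y Hx Hy.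
        apply image_rep_injective; apply HinL; assumption.
      - intros z Hz; apply in_map_iff in Hz as [x [<- Hx]]; apply in_seq; split; [lia|].
        apply NNPP; intros Hnot; apply Hsmall; exists x; split; [exact Hx | lia]. }
    rewrite length_map, length_seq in Hle; lia.
Qed.

(* A rare class lacking rank [m] would give a rare class lacking a smaller rank. *)
Lemma rare_has_all_ranks m : forall r, rare r -> has_rank EA r m.
Proof.
  induction m as [m IH] using (well_founded_induction lt_wf); intros r Hrare.
  apply NNPP; intros Hm.
  destruct (rare_smaller r Hrare) as (r1 & m1 & Hrare1 & Hrm1 & Hr1m1).
  assert (Hlt : m1 < m).
  { destruct (le_lt_dec m m1) as [Hle|Hlt]; [|exact Hlt].
    contradiction (Hm (has_rank_le EA EA_sym EA_trans r m1 m Hrm1 Hle)). }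
  exact (Hr1m1 (IH m1 Hlt r1 Hrare1)).
Qed.
End Unbounded.

Lemma rare_bounded : exists M, forall r, is_rep EA r -> rare r -> r < M.
Proof.
  apply NNPP; intros Hno.
  assert (Hunb : forall M, exists r, M <= r /\ is_rep EA r /\ rare r).
  { intros M; apply NNPP; intros Hnone; apply Hno; exists M; intros r Hr Hrare.
    apply NNPP; intros Hge; apply Hnone; exists r; split; [lia | auto]. }
  destruct (Hunb 0) as (r & _ & _ & Hrare).
  destruct (rare_smaller Hunb r Hrare) as (r1 & m & Hrare1 & _ & Hr1m).
  exact (Hr1m (rare_has_all_ranks Hunb m r1 Hrare1)).
Qed.

Lemma rare_reps_finite : exists RA : list nat,
  (forall r, In r RA -> is_rep EA r) /\
  (forall r, is_rep EA r -> ~ In r RA ->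
     forall b, exists d, b < d /\ is_rep EB d /\ fits_into EA EB r d).
Proof.
  destruct rare_bounded as [M HM]; exists (list_below (fun r => is_rep EA r /\ rare r) M); split.
  - intros r Hr; apply In_list_below in Hr; tauto.
  - intros r Hr Hnot b; apply NNPP; intros Hnone; apply Hnot, In_list_below.
    assert (Hrare : rare r) by (exists b; intros d Hd Hdrep Hfit; apply Hnone; eauto).
    auto.
Qed.
End RareClasses.

(** * The greedy embedding *)

Section Greedy.
Variables EA EB : nat -> nat -> Prop.
Variable RA : list nat.
Variable g : nat -> nat.
Hypothesis fits_unbounded : forall r, is_rep EA r -> ~ In r RA ->
  forall b, exists d, b < d /\ is_rep EB d /\ fits_into EA EB r d.

Definition free_A (r : nat) : Prop := is_rep EA r /\ ~ In r RA.
Definition free_B (d : nat) : Prop := is_rep EB d /\ ~ In d (map g RA).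

Definition eligible (t : nat -> nat) (r d : nat) : Prop :=
  free_B d /\ fits_into EA EB r d /\ forall r', r' < r -> free_A r' -> t r' <> d.

Lemma eligible_ext t t' r d :
  (forall r', r' < r -> t r' = t' r') -> eligible t r d <-> eligible t' r d.
Proof.
  intros Htt'; unfold eligible; split; intros (Hd & Hfit & Hnew);
    (split; [exact Hd | split; [exact Hfit|]]); intros r' Hr';
    [rewrite <- Htt' | rewrite Htt']; auto.
Qed.

Definition greedy_step (l : list nat) (r : nat) : nat :=
  if decide (free_A r) then least (eligible (fun i => nth i l 0) r) else 0.

Fixpoint greedy_prefix (n : nat) : list nat :=
  match n with 0 => [] | S n => greedy_prefix n ++ [greedy_step (greedy_prefix n) n] end.

Definition greedy (r : nat) : nat := greedy_step (greedy_prefix r) r.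

Lemma length_greedy_prefix n : length (greedy_prefix n) = n.
Proof. induction n; simpl; [reflexivity|]; rewrite length_app, IHn; simpl; lia. Qed.

Lemma nth_greedy_prefix n i : i < n -> nth i (greedy_prefix n) 0 = greedy i.
Proof.
  induction n as [|n IH]; intros Hi; [lia|]; simpl.
  destruct (Nat.eq_dec i n) as [->|Hne].
  - rewrite app_nth2, length_greedy_prefix, Nat.sub_diag by (rewrite length_greedy_prefix; lia).
    reflexivity.
  - rewrite app_nth1 by (rewrite length_greedy_prefix; lia); apply IH; lia.
Qed.

Lemma eligible_greedy_prefix r d :
  eligible (fun i => nth i (greedy_prefix r) 0) r d <-> eligible greedy r d.
Proof. apply eligible_ext; intros; apply nth_greedy_prefix; assumption. Qed.

(* A fitting class beyond all values used so far is eligible. *)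
Lemma eligible_exists r : free_A r -> exists d, eligible greedy r d.
Proof.
  intros [Hr HnRA].
  destruct (fits_unbounded r Hr HnRA (list_max (map g RA) + list_max (map greedy (seq 0 r))))
    as [d [Hd [Hdrep Hfit]]].
  exists d; split; [split; [exact Hdrep|] | split; [exact Hfit|]].
  - intros Hin; pose proof (le_list_max _ _ Hin); lia.
  - intros r' Hr' _ <-.
    assert (Hin : In (greedy r') (map greedy (seq 0 r))) by (apply in_map, in_seq; lia).
    pose proof (le_list_max _ _ Hin); lia.
Qed.

Lemma greedy_free r : free_A r -> is_least (eligible greedy r) (greedy r).
Proof.
  intros Hr; destruct (eligible_exists r Hr) as [d Hd].
  unfold greedy, greedy_step; destruct (decide (free_A r)) as [_|]; [|contradiction].
  apply eligible_greedy_prefix in Hd.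
  apply (is_least_iff _ _ _ (eligible_greedy_prefix r)), (least_spec _ _ Hd).
Qed.

Lemma greedy_not_free r : ~ free_A r -> greedy r = 0.
Proof.
  intros Hr; unfold greedy, greedy_step.
  destruct (decide (free_A r)); [contradiction | reflexivity].
Qed.

(* A beta-coded course of values of [greedy] up to [R]; it makes the recursion arithmetical. *)
Definition greedy_trace (c k R : nat) : Prop :=
  forall j, j < S R ->
    (free_A j /\ is_least (eligible (beta c k) j) (beta c k j)) \/ (~ free_A j /\ beta c k j = 0).

Lemma greedy_trace_sound c k R : greedy_trace c k R -> forall j, j <= R -> beta c k j = greedy j.
Proof.
  intros Htrace j; induction j as [j IH] using (well_founded_induction lt_wf); intros Hj.
  assert (Helig : forall d, eligible (beta c k) j d <-> eligible greedy j d)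
    by (intros d; apply eligible_ext; intros; apply IH; lia).
  destruct (Htrace j ltac:(lia)) as [[Hfree Hleast]|[Hfree ->]].
  - apply (least_unique (eligible greedy j)); [|apply greedy_free, Hfree].
    apply (is_least_iff _ _ _ Helig), Hleast.
  - symmetry; apply greedy_not_free, Hfree.
Qed.

Lemma greedy_trace_exists R : exists c k, greedy_trace c k R /\ beta c k R = greedy R.
Proof.
  destruct (beta_exists greedy (S R)) as [c [k Hb]].
  exists c, k; split; [|apply Hb; lia].
  intros j Hj; destruct (classic (free_A j)) as [Hfree|Hfree]; [left | right].
  - assert (Helig : forall d, eligible (beta c k) j d <-> eligible greedy j d)
      by (intros d; apply eligible_ext; intros; apply Hb; lia).
    rewrite Hb by exact Hj; split; [exact Hfree|].
    apply (is_least_iff (eligible greedy j)), greedy_free, Hfree; intros d; symmetry; apply Helig.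
  - rewrite Hb by exact Hj; split; [exact Hfree | apply greedy_not_free, Hfree].
Qed.

Lemma greedy_iff_trace r d : greedy r = d <-> exists c k, greedy_trace c k r /\ beta c k r = d.
Proof.
  split.
  - intros <-; apply greedy_trace_exists.
  - intros [c [k [Htrace <-]]]; symmetry; apply (greedy_trace_sound c k r Htrace); lia.
Qed.
End Greedy.

Section Embedding.
Variables EA EB : nat -> nat -> Prop.
Hypothesis EA_sym : forall x y, EA x y -> EA y x.
Hypothesis EA_trans : forall x y z, EA x y -> EA y z -> EA x z.
Hypothesis EB_sym : forall x y, EB x y -> EB y x.
Hypothesis EB_trans : forall x y z, EB x y -> EB y z -> EB x z.
Variable RA : list nat.
Variable g : nat -> nat.
Hypothesis special_target :
  forall r, In r RA -> is_rep EA r /\ is_rep EB (g r) /\ fits_into EA EB r (g r).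
Hypothesis special_injective : forall r r', In r RA -> In r' RA -> g r = g r' -> r = r'.
Hypothesis fits_unbounded : forall r, is_rep EA r -> ~ In r RA ->
  forall b, exists d, b < d /\ is_rep EB d /\ fits_into EA EB r d.

Definition target (r d : nat) : Prop :=
  (In r RA /\ d = g r) \/ (free_A EA RA r /\ greedy EA EB RA g r = d).

Lemma greedy_eligible r :
  free_A EA RA r -> eligible EA EB RA g (greedy EA EB RA g) r (greedy EA EB RA g r).
Proof. intros Hr; apply greedy_free; assumption. Qed.

Lemma target_exists r : is_rep EA r -> exists d, target r d.
Proof.
  intros Hr; destruct (classic (In r RA)) as [Hin|Hnin]; [exists (g r); left; auto|].
  exists (greedy EA EB RA g r); right; split; [split|]; auto.
Qed.

Lemma target_functional r d d' : target r d -> target r d' -> d = d'.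
Proof. intros [[Hr ->]|[[_ Hr] <-]] [[Hr' ->]|[[_ Hr'] <-]]; auto; contradiction. Qed.

Lemma target_is_rep r d : target r d -> is_rep EB d /\ fits_into EA EB r d.
Proof.
  intros [[Hr ->]|[Hr <-]]; [apply special_target, Hr|].
  destruct (greedy_eligible r Hr) as [[Hrep _] [Hfit _]]; auto.
Qed.

Lemma target_injective r r' d : target r d -> target r' d -> r = r'.
Proof.
  intros [[Hr ->]|[Hr <-]] [[Hr' Hd]|[Hr' Hd]].
  - apply special_injective; auto.
  - destruct (greedy_eligible r' Hr') as [[_ Hnot] _]; rewrite Hd in Hnot.
    contradiction (Hnot (in_map g RA r Hr)).
  - destruct (greedy_eligible r Hr) as [[_ Hnot] _]; rewrite Hd in Hnot.
    contradiction (Hnot (in_map g RA r' Hr')).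
  - destruct (lt_eq_lt_dec r r') as [[Hlt|]|Hlt]; [exfalso | assumption | exfalso].
    + destruct (greedy_eligible r' Hr') as [_ [_ Hnew]]; exact (Hnew r Hlt Hr (eq_sym Hd)).
    + destruct (greedy_eligible r Hr) as [_ [_ Hnew]]; exact (Hnew r' Hlt Hr' Hd).
Qed.

Definition emb_spec (x y : nat) : Prop :=
  (EA x x /\ exists r n d,
     rep_of EA r x /\ rank EA x = n /\ target r d /\ EB d y /\ rank EB y = n) \/
  (~ EA x x /\ y = 0).

Lemma emb_spec_exists x : exists y, emb_spec x y.
Proof.
  destruct (classic (EA x x)) as [Hx|Hx]; [|exists 0; right; auto].
  destruct (rep_of_exists EA x Hx) as [r Hr].
  destruct (target_exists r (rep_of_is_rep EA EA_sym EA_trans r x Hr)) as [d Hd].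
  destruct (proj2 (target_is_rep r d Hd) (rank EA x)) as [y [Hdy Hy]].
  { exists x; split; [apply Hr | reflexivity]. }
  exists y; left; split; [exact Hx|]; exists r, (rank EA x), d; auto.
Qed.

Lemma emb_spec_functional x y y' : emb_spec x y -> emb_spec x y' -> y = y'.
Proof.
  intros [[Hx (r & n & d & Hr & Hn & Hd & Hdy & Hy)]|[Hx ->]]
         [[Hx' (r' & n' & d' & Hr' & Hn' & Hd' & Hdy' & Hy')]|[Hx' ->]];
    try contradiction; [|reflexivity].
  pose proof (rep_of_unique EA r r' x Hr Hr') as <-.
  pose proof (target_functional r d d' Hd Hd') as <-.
  apply (rank_injective EB EB_sym EB_trans); [eauto | congruence].
Qed.

Definition emb (x : nat) : nat := epsilon (inhabits 0) (emb_spec x).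

Lemma emb_iff_spec x y : emb x = y <-> emb_spec x y.
Proof.
  assert (Hemb : emb_spec x (emb x)) by (unfold emb; apply epsilon_spec, emb_spec_exists).
  split; [intros <-; exact Hemb | apply emb_spec_functional, Hemb].
Qed.

Lemma emb_in_target x : EA x x ->
  exists r d, rep_of EA r x /\ target r d /\ EB d (emb x) /\ rank EB (emb x) = rank EA x.
Proof.
  intros Hx; destruct (proj1 (emb_iff_spec x (emb x)) eq_refl)
    as [[_ (r & n & d & Hr & <- & Hd & Hdy & Hy)]|[Hnx _]]; [|contradiction].
  exists r, d; auto.
Qed.

Lemma emb_dom x : EA x x -> EB (emb x) (emb x).
Proof. intros Hx; destruct (emb_in_target x Hx) as (r & d & _ & _ & Hd & _); eauto. Qed.

Lemma emb_rel x x' : EA x x -> EA x' x' -> (EA x x' <-> EB (emb x) (emb x')).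
Proof.
  intros Hx Hx'; destruct (emb_in_target x Hx) as (r & d & Hr & Hd & Hdy & _).
  destruct (emb_in_target x' Hx') as (r' & d' & Hr' & Hd' & Hdy' & _); split.
  - intros Hxx'; pose proof (rep_of_class EA EA_sym EA_trans r x x' Hr Hxx') as Hrx'.
    pose proof (rep_of_unique EA r r' x' Hrx' Hr') as <-.
    pose proof (target_functional r d d' Hd Hd') as <-; eauto.
  - intros Hyy'; assert (Hdd' : d = d').
    { apply (is_rep_unique EB EB_sym EB_trans);
        [apply (target_is_rep r) | apply (target_is_rep r') | eauto]; assumption. }
    subst d'; pose proof (target_injective r r' d Hd Hd') as <-.
    apply (EA_trans _ r); [apply EA_sym|]; [apply Hr | apply Hr'].
Qed.

Lemma emb_injective x x' : EA x x -> EA x' x' -> emb x = emb x' -> x = x'.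
Proof.
  intros Hx Hx' Heq.
  assert (Hxx' : EA x x')
    by (apply emb_rel; [assumption | assumption | rewrite Heq; apply emb_dom, Hx']).
  apply (rank_injective EA EA_sym EA_trans _ _ Hxx').
  destruct (emb_in_target x Hx) as (_ & _ & _ & _ & _ & Hrk).
  destruct (emb_in_target x' Hx') as (_ & _ & _ & _ & _ & Hrk').
  rewrite <- Hrk, <- Hrk', Heq; reflexivity.
Qed.
End Embedding.

(** * Definability of the embedding *)

Section DefinableEmbedding.
Variable X : nat -> Prop.
Variables EA EB : nat -> nat -> Prop.
Hypothesis EA_Delta0 : Delta0Def X (fun e => EA (e 0) (e 1)).
Hypothesis EB_Delta0 : Delta0Def X (fun e => EB (e 0) (e 1)).
Variable RA : list nat.
Variable g : nat -> nat.
Hypothesis fits_unbounded : forall r, is_rep EA r -> ~ In r RA ->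
  forall b, exists d, b < d /\ is_rep EB d /\ fits_into EA EB r d.

Lemma Pi2_fits_into a b : PiDef X 2 (fun e => fits_into EA EB (teval e a) (teval e b)).
Proof.
  apply (Pi_subst X 2 (fun e => fits_into EA EB (e 0) (e 1)) [a; b]).
  apply definable_ext with (All (fun e => ~ has_rank EA (e 1) (e 0) \/ has_rank EB (e 2) (e 0))).
  - intros e; unfold All, fits_into; split; intros H n.
    + intros Hn; destruct (H n); tauto.
    + apply imply_to_or, H.
  - apply Pi_all, Pi_or.
    + apply Pi_S, Pi_not, (Sigma1_has_rank X EA EA_Delta0 (tvar 1) (tvar 0)).
    + apply Pi_of_Sigma, (Sigma1_has_rank X EB EB_Delta0 (tvar 2) (tvar 0)).
Qed.

Lemma Delta0_free_A a : Delta0Def X (fun e => free_A EA RA (teval e a)).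
Proof. apply Delta0_and; [apply (Delta0_rep_of X EA EA_Delta0) | apply Delta0_not, Delta0_In]. Qed.

Lemma Delta0_free_B a : Delta0Def X (fun e => free_B EB RA g (teval e a)).
Proof. apply Delta0_and; [apply (Delta0_rep_of X EB EB_Delta0) | apply Delta0_not, Delta0_In]. Qed.

Lemma Pi2_eligible : PiDef X 2 (fun e => eligible EA EB RA g (beta (e 0) (e 1)) (e 2) (e 3)).
Proof.
  apply Pi_and; [|apply Pi_and].
  - apply Pi_of_Delta0, (Delta0_free_B (tvar 3)).
  - apply (Pi2_fits_into (tvar 2) (tvar 3)).
  - apply Pi_of_Delta0.
    apply definable_ext with
      (Ball (tvar 2) (fun e => ~ free_A EA RA (e 0) \/ beta (e 1) (e 2) (e 0) <> e 4)).
    + intros e; unfold Ball; split; intros H r' Hr'; specialize (H r' Hr');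
        [tauto | apply imply_to_or, H].
    + apply Delta0_ball, Delta0_or; [apply Delta0_not, (Delta0_free_A (tvar 0)) |].
      apply Delta0_not, (Delta0_beta X (tvar 1) (tvar 2) (tvar 0) (tvar 4)).
Qed.

Lemma Sigma3_greedy_trace : SigmaDef X 3 (fun e => greedy_trace EA EB RA g (e 0) (e 1) (e 2)).
Proof.
  apply (Sigma_ball X 3 (tsucc (tvar 2)) (fun e =>
    (free_A EA RA (e 0) /\
       is_least (eligible EA EB RA g (beta (e 1) (e 2)) (e 0)) (beta (e 1) (e 2) (e 0))) \/
    (~ free_A EA RA (e 0) /\ beta (e 1) (e 2) (e 0) = 0))).
  apply Sigma_or; apply Sigma_and.
  - apply Sigma_of_Delta0, (Delta0_free_A (tvar 0)).
  - apply (Sigma_let_beta X 3 (fun e => eligible EA EB RA g (beta (e 2) (e 3)) (e 1) (e 0) /\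
      Ball (tvar 0) (fun e => ~ eligible EA EB RA g (beta (e 3) (e 4)) (e 2) (e 0)) e)
      (tvar 1) (tvar 2) (tvar 0)).
    apply Sigma_and.
    + apply Sigma_of_Pi, (Pi_subst X 2 _ [tvar 2; tvar 3; tvar 1; tvar 0] Pi2_eligible).
    + apply (Sigma_le X 2); [lia|]; apply Sigma_ball, Sigma_not.
      apply (Pi_subst X 2 _ [tvar 3; tvar 4; tvar 2; tvar 0] Pi2_eligible).
  - apply Sigma_of_Delta0, Delta0_not, (Delta0_free_A (tvar 0)).
  - apply Sigma_of_Delta0, (Delta0_beta X (tvar 1) (tvar 2) (tvar 0) tzero).
Qed.

Lemma Sigma3_greedy a b : SigmaDef X 3 (fun e => greedy EA EB RA g (teval e a) = teval e b).
Proof.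
  apply (Sigma_subst X 3 (fun e => greedy EA EB RA g (e 0) = e 1) [a; b]).
  apply definable_ext with
    (Ex (Ex (fun e => greedy_trace EA EB RA g (e 1) (e 0) (e 2) /\ beta (e 1) (e 0) (e 2) = e 3))).
  - intros e; rewrite (greedy_iff_trace EA EB RA g fits_unbounded); reflexivity.
  - apply Sigma_ex, Sigma_ex, Sigma_and.
    + apply (Sigma_subst X 3 _ [tvar 1; tvar 0; tvar 2] Sigma3_greedy_trace).
    + apply Sigma_of_Delta0, (Delta0_beta X (tvar 1) (tvar 0) (tvar 2) (tvar 3)).
Qed.

Lemma Sigma3_target a b : SigmaDef X 3 (fun e => target EA EB RA g (teval e a) (teval e b)).
Proof.
  apply Sigma_or.
  - apply Sigma_of_Delta0, definable_ext with
      (fun e => In (teval e a, teval e b) (map (fun r => (r, g r)) RA)); [|apply Delta0_In_pair].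
    intros e; rewrite in_map_iff; split; [intros [r [[= -> ->] Hr]]; auto | intros [Hr ->]; eauto].
  - apply Sigma_and; [apply Sigma_of_Delta0, Delta0_free_A | apply Sigma3_greedy].
Qed.

Lemma Sigma3_emb_spec : SigmaDef X 3 (fun e => emb_spec EA EB RA g (e 0) (e 1)).
Proof.
  apply Sigma_or; apply Sigma_and.
  - apply Sigma_of_Delta0, (Delta0_E X EA EA_Delta0 (tvar 0) (tvar 0)).
  - apply definable_ext with (Ex (Ex (Ex (fun e => rep_of EA (e 2) (e 3) /\ rank EA (e 3) = e 1 /\
      target EA EB RA g (e 2) (e 0) /\ EB (e 0) (e 4) /\ rank EB (e 4) = e 1)))); [reflexivity|].
    apply Sigma_ex, Sigma_ex, Sigma_ex.
    apply Sigma_and; [|apply Sigma_and; [|apply Sigma_and; [|apply Sigma_and]]].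
    + apply Sigma_of_Delta0, (Delta0_rep_of X EA EA_Delta0 (tvar 2) (tvar 3)).
    + apply (Sigma_le X 1); [lia|]; apply (Sigma1_rank X EA EA_Delta0 (tvar 3) (tvar 1)).
    + apply (Sigma3_target (tvar 2) (tvar 0)).
    + apply Sigma_of_Delta0, (Delta0_E X EB EB_Delta0 (tvar 0) (tvar 4)).
    + apply (Sigma_le X 1); [lia|]; apply (Sigma1_rank X EB EB_Delta0 (tvar 4) (tvar 1)).
  - apply Sigma_of_Delta0, Delta0_not, (Delta0_E X EA EA_Delta0 (tvar 0) (tvar 0)).
  - apply Sigma_of_Delta0, (Delta0_eq X (tvar 1) tzero).
Qed.
End DefinableEmbedding.

Lemma Sigma_rel_of_SigmaDef n X (R : nat -> nat -> Prop) :
  SigmaDef X n (fun e => R (e 0) (e 1)) -> Sigma_rel n X R.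
Proof. intros [f [Hf HR]]; exists f; split; [exact Hf | intros x y; apply (HR (env2 x y))]. Qed.

Lemma Delta_fun_of_graph n X (f : nat -> nat) :
  SigmaDef X (S n) (fun e => f (e 0) = e 1) -> Delta_fun (S n) X f.
Proof.
  intros Hgraph; split; apply Sigma_rel_of_SigmaDef; [exact Hgraph|].
  apply definable_ext with (Ex (fun e => f (e 1) = e 0 /\ e 0 <> e 2)).
  - intros e; unfold Ex; split; [intros [z [<- Hz]]; exact Hz | intros Hne; exists (f (e 0)); auto].
  - apply Sigma_ex, Sigma_and; [apply (Sigma_subst X _ _ [tvar 1; tvar 0] Hgraph)|].
    apply Sigma_of_Delta0, Delta0_not, (Delta0_eq X (tvar 0) (tvar 2)).
Qed.

Lemma dom_iff_rel_refl (S : EqStr) x : is_equivalence_structure S -> dom S x <-> rel S x x.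
Proof. intros (Hdom & Hrefl & _); split; [apply Hrefl | intros Hx; apply (Hdom x x Hx)]. Qed.

Section EquivalenceStructures.
Variables A B : EqStr.
Hypothesis A_equiv : is_equivalence_structure A.
Hypothesis B_equiv : is_equivalence_structure B.

Lemma embedding_iff f : embedding A B f <->
  (forall x, rel A x x -> rel B (f x) (f x)) /\
  (forall x y, rel A x x -> rel A y y -> f x = f y -> x = y) /\
  (forall x y, rel A x x -> rel A y y -> (rel A x y <-> rel B (f x) (f y))).
Proof.
  assert (HA : forall x, dom A x <-> rel A x x) by (intros; apply dom_iff_rel_refl, A_equiv).
  assert (HB : forall x, dom B x <-> rel B x x) by (intros; apply dom_iff_rel_refl, B_equiv).
  unfold embedding; setoid_rewrite HA; setoid_rewrite HB; reflexivity.
Qed.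

Lemma Delta3_embedding X :
  Delta0Def X (fun e => rel A (e 0) (e 1)) -> Delta0Def X (fun e => rel B (e 0) (e 1)) ->
  (exists h, embedding A B h) -> exists f, embedding A B f /\ Delta_fun 3 X f.
Proof.
  intros HA HB [h Hh]; apply embedding_iff in Hh as (h_dom & h_inj & h_rel).
  destruct A_equiv as (_ & _ & A_sym & A_trans), B_equiv as (_ & _ & B_sym & B_trans).
  destruct (rare_reps_finite _ _ A_sym A_trans B_sym B_trans h h_dom h_inj h_rel)
    as [RA [HRA Hfits]].
  set (g := image_rep (rel B) h).
  assert (Hspecial : forall r, In r RA ->
    is_rep (rel A) r /\ is_rep (rel B) (g r) /\ fits_into (rel A) (rel B) r (g r)).
  { intros r Hr; pose proof (proj1 (HRA r Hr)) as Hrr; split; [apply HRA, Hr|].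
    split; [apply (image_rep_is_rep (rel A)) | apply fits_into_image_rep]; assumption. }
  assert (Hinj : forall r r', In r RA -> In r' RA -> g r = g r' -> r = r')
    by (intros r r' Hr Hr'; apply (image_rep_injective (rel A)); auto).
  exists (emb (rel A) (rel B) RA g); split.
  - apply embedding_iff; split; [|split];
      [apply emb_dom | apply emb_injective | apply emb_rel]; assumption.
  - apply Delta_fun_of_graph.
    apply definable_ext with (fun e => emb_spec (rel A) (rel B) RA g (e 0) (e 1)).
    + intros e; symmetry; apply emb_iff_spec; assumption.
    + apply Sigma3_emb_spec; assumption.
Qed.
End EquivalenceStructures.

Lemma triangle_even s : exists p, s * (s + 1) = 2 * p.
Proof. induction s as [|s [p Hp]]; [exists 0; lia | exists (p + s + 1); nia]. Qed.

Lemma cpair_spec x y p : (x + y) * (x + y + 1) = 2 * p -> cpair x y = p + y.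
Proof. intros Hp; unfold cpair; rewrite Hp, Nat.mul_comm, Nat.div_mul by lia; reflexivity. Qed.

Lemma cpair_injective x y x' y' : cpair x y = cpair x' y' -> x = x' /\ y = y'.
Proof.
  intros Heq; destruct (triangle_even (x + y)) as [p Hp], (triangle_even (x' + y')) as [p' Hp'].
  rewrite (cpair_spec _ _ _ Hp), (cpair_spec _ _ _ Hp') in Heq.
  destruct (lt_eq_lt_dec (x + y) (x' + y')) as [[Hlt|Hs]|Hlt].
  - assert ((x + y + 1) * (x + y + 2) <= (x' + y') * (x' + y' + 1))
      by (apply Nat.mul_le_mono; lia); nia.
  - rewrite Hs in Hp; assert (p = p') by lia; lia.
  - assert ((x' + y' + 1) * (x' + y' + 2) <= (x + y) * (x + y + 1))
      by (apply Nat.mul_le_mono; lia); nia.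
Qed.

Lemma join_diagram_l S Y x y : join (diagram S) Y (4 * cpair x y + 2) <-> rel S x y.
Proof.
  unfold join, diagram; split.
  - intros [[m [Hm [[z [Hz _]]|[x' [y' [Hxy Hrel]]]]]]|[m [Hm _]]]; try lia.
    destruct (cpair_injective x y x' y') as [-> ->]; [lia | exact Hrel].
  - intros Hrel; left; exists (2 * cpair x y + 1); split; [lia|]; right; exists x, y; auto.
Qed.

Lemma join_diagram_r Y T x y : join Y (diagram T) (4 * cpair x y + 3) <-> rel T x y.
Proof.
  unfold join, diagram; split.
  - intros [[m [Hm _]]|[m [Hm [[z [Hz _]]|[x' [y' [Hxy Hrel]]]]]]]; try lia.
    destruct (cpair_injective x y x' y') as [-> ->]; [lia | exact Hrel].
  - intros Hrel; right; exists (2 * cpair x y + 1); split; [lia|]; right; exists x, y; auto.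
Qed.

(* [cpair x y = p + y] where [2 p = s (s + 1)] and [s = x + y]; this [p] is at most [s (s + 1)]. *)
Lemma Delta0_cpair_code X (R : nat -> nat -> Prop) a b :
  (forall x y, X (a * cpair x y + b) <-> R x y) -> Delta0Def X (fun e => R (e 0) (e 1)).
Proof.
  intros HR; set (s := tadd (tvar 1) (tvar 2)); set (s0 := tadd (tvar 0) (tvar 1)).
  apply definable_ext with (Bex (tsucc (tmul s0 (tsucc s0)))
    (fun e => teval e (tadd (tvar 0) (tvar 0)) = teval e (tmul s (tsucc s)) /\
              X (teval e (tadd (tmul (numeral a) (tadd (tvar 0) (tvar 2))) (numeral b))))).
  - intros e; unfold Bex; simpl; setoid_rewrite teval_numeral; rewrite <- HR; split.
    + intros [p [_ [Hp HX]]]; rewrite (cpair_spec _ _ p) by lia; exact HX.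
    + intros HX; destruct (triangle_even (e 0 + e 1)) as [p Hp]; exists p.
      rewrite (cpair_spec _ _ p Hp) in HX; repeat split; [lia | lia | exact HX].
  - apply Delta0_bex, Delta0_and; [apply Delta0_eq | apply Delta0_in].
Qed.

Theorem theorem3p11 : forall S : EqStr,
  is_equivalence_structure S -> rel_Delta3_biemb_categorical S.
Proof.
  intros S HS T HT [HST HTS].
  set (X := join (diagram S) (diagram T)).
  assert (HSX : Delta0Def X (fun e => rel S (e 0) (e 1)))
    by (apply (Delta0_cpair_code X _ 4 2), join_diagram_l).
  assert (HTX : Delta0Def X (fun e => rel T (e 0) (e 1)))
    by (apply (Delta0_cpair_code X _ 4 3), join_diagram_r).
  destruct (Delta3_embedding S T HS HT X HSX HTX HST) as [f [Hf Hf3]].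
  destruct (Delta3_embedding T S HT HS X HTX HSX HTS) as [g [Hg Hg3]].
  exists f, g; auto.
Qed.
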